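(* Let $n\ge1$, let $f:\{0,1\}^n\to\{0,1\}^n$ be a Boolean model, and let $h$ be a multivalued refinement of $f$ on $X=\prod_{j=1}^n\{0,1,\dots,m_j\}$ built by the threshold construction described in the context. Let $J=\{j: m_j>1\}$ and suppose no component $g_j$ with $j\in J$ is self-inhibited. For a Boolean state $\omega$, let $\omega'\in X$ be obtained from $\omega$ by replacing, for each $j\in J$, the coordinate $\omega_j$ by $m_j$ whenever $\omega_j=1$. (1) If $\omega$ is a fixed point of $f$, then $\omega'$ is a fixed point of $h$; moreover every fixed point of $h$ is of the form $\omega'$ for some fixed point $\omega$ of $f$. (2) If the attractors of the asynchronous dynamics of $f$ are exactly $l$ fixed points $\omega^{(1)},\dots,\omega^{(l)}$, then $\omega'^{(1)},\dots,\omega'^{(l)}$ are the only attractors of the asynchronous dynamics of $h$.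
   Context: Asynchronous dynamics of a map $h:X\to X$ ($X=\prod_j\{0,\dots,m_j\}$, $h_j(x)-x_j\in\{-1,0,1\}$): a transition $x\to y$ exists if there is $i_0$ with $x_{i_0}\neq h_{i_0}(x)$, $y_{i_0}=x_{i_0}+\mathrm{sign}(h_{i_0}(x)-x_{i_0})$, $y_j=x_j$ otherwise. The attractors are the terminal strongly connected components of this state transition graph; a fixed point is a state $x$ with $h(x)=x$. For $x\in X$, $\alpha(x)=\{x'\in\{0,1\}^n:\forall j,\ (x_j=0\Rightarrow x'_j=0),(x_j=m_j\Rightarrow x'_j=1)\}$. A multivalued model $h$ is a refinement of $f$ if for all $x\in X$, $j$: $h_j(x)<x_j\Rightarrow\exists x'\in\alpha(x), f_j(x')<x'_j$ and $h_j(x)>x_j\Rightarrow\exists x'\in\alpha(x), f_j(x')>x'_j$. Threshold construction: write each $f_{j_0}$ in a shortest disjunctive normal form of literals $x_j$ or $\neg x_j$; for each literal whose variable $j$ has $m_j>1$, choose $s\in\{0,\dots,m_j-1\}$ and replace $x_j$ by $x_j\ge s+1$, $\neg x_j$ by $x_j<s+1$; set $\mathcal H_{j_0}(x)=+1$ if the resulting formula is true at $x\in X$ and $-1$ otherwise, and $h_j(x)=\max(0,\min(m_j,x_j+\mathcal H_j(x)))$. Component $g_j$ is self-inhibited if $\neg x_j$ occurs in the shortest DNF of $f_j$. *)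

From Stdlib Require Import Relations.
From mathcomp Require Import all_boot.
Set Implicit Arguments. Unset Strict Implicit. Unset Printing Implicit Defensive.

Definition bstate (n : nat) := {ffun 'I_n -> bool}.
Definition mstate (n : nat) := {ffun 'I_n -> nat}.

Definition inX (n : nat) (m : 'I_n -> nat) (x : mstate n) : Prop :=
  forall j, x j <= m j.

(* A literal: (variable j, polarity); true = x_j, false = ~ x_j. *)
Definition lit (n : nat) := ('I_n * bool)%type.
Definition dnf (n : nat) := seq (seq (lit n)).

Definition lit_eval (n : nat) (w : bstate n) (l : lit n) : bool :=
  if l.2 then w l.1 else ~~ w l.1.
Definition dnf_eval (n : nat) (w : bstate n) (D : dnf n) : bool :=
  has (all (lit_eval w)) D.

Definition is_dnf_of (n : nat) (f : bstate n -> bstate n) (j : 'I_n) (D : dnf n) :=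
  forall w, f w j = dnf_eval w D.

Definition dnf_size (n : nat) (D : dnf n) : nat := sumn (map size D).

Definition shortest_dnf_of (n : nat) (f : bstate n -> bstate n) (j : 'I_n) (D : dnf n) :=
  is_dnf_of f j D /\ forall D', is_dnf_of f j D' -> dnf_size D <= dnf_size D'.

(* component j is self-inhibited: ~x_j occurs in the (chosen) shortest DNF of f_j *)
Definition self_inhibited (n : nat) (D : 'I_n -> dnf n) (j : 'I_n) : Prop :=
  has (fun c => (j, false) \in c) (D j).

(* thresholded literal ((j, polarity), s): x_j >= s+1, resp. x_j < s+1 *)
Definition tlit (n : nat) := (('I_n * bool) * nat)%type.
Definition tdnf (n : nat) := seq (seq (tlit n)).

Definition forget (n : nat) (T : tdnf n) : dnf n := map (map (fun l => l.1)) T.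

Definition tlit_eval (n : nat) (x : mstate n) (l : tlit n) : bool :=
  if l.1.2 then l.2.+1 <= x l.1.1 else x l.1.1 < l.2.+1.
Definition tdnf_eval (n : nat) (x : mstate n) (T : tdnf n) : bool :=
  has (all (tlit_eval x)) T.

(* admissible thresholds: s in {0..m_j-1} if m_j > 1; literal unchanged
   (i.e. s = 0, as x_j >= 1 <-> x_j = 1 on {0,1}) if m_j = 1 *)
Definition thresholds_ok (n : nat) (m : 'I_n -> nat) (T : 'I_n -> tdnf n) : Prop :=
  forall j c l, c \in T j -> l \in c ->
    if 1 < m l.1.1 then l.2 < m l.1.1 else l.2 == 0.

(* h_j(x) = max(0, min(m_j, x_j + H_j(x))), H_j = +1 if formula true else -1
   (nat truncated subtraction realises the max with 0) *)
Definition hmap (n : nat) (m : 'I_n -> nat) (T : 'I_n -> tdnf n) (x : mstate n)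
  : mstate n :=
  [ffun j => if tdnf_eval x (T j) then minn (m j) (x j).+1
             else minn (m j) (x j).-1].

Definition bstep (n : nat) (f : bstate n -> bstate n) (x y : bstate n) : Prop :=
  exists i, x i != f x i /\ y i = f x i /\ forall j, j != i -> y j = x j.

Definition mstep (n : nat) (h : mstate n -> mstate n) (x y : mstate n) : Prop :=
  exists i, x i != h x i /\
    y i = (if x i < h x i then (x i).+1 else (x i).-1) /\
    forall j, j != i -> y j = x j.

(* attractor = terminal strongly connected component of the state transition
   graph restricted to the state space dom *)
Definition attractor (S : Type) (dom : S -> Prop) (step : S -> S -> Prop)
  (A : S -> Prop) : Prop :=
  (exists x, A x) /\ (forall x, A x -> dom x) /\
  (forall x y, A x -> A y -> clos_refl_trans S step x y) /\
  (forall x y, A x -> clos_refl_trans S step x y -> A y).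

Definition lift_state (n : nat) (m : 'I_n -> nat) (w : bstate n) : mstate n :=
  [ffun j => if (1 < m j) && w j then m j else nat_of_bool (w j)].

(* On a lifted Boolean state every threshold literal evaluates like the Boolean
   literal it refines, so the formula of h_j at w' is f_j(w): fixed points
   correspond, and a Boolean transition is simulated by walking the flipped
   coordinate of w' to 0 or m_j. Since no j in J is self-inhibited, the formula
   of h_j only contains x_j positively, hence is monotone in x_j; this keeps such
   a walk going to its end, and likewise drives any state of X coordinatewise
   to a lifted Boolean state. So every attractor of h contains a lifted Boolean
   state, from which the lift of one of the fixed points of f is reachable; as a
   fixed point of h, that lift is the whole attractor. *)

From Stdlib Require Import Relations ClassicalEpsilon Classical.
From mathcomp Require Import all_boot zify.
Set Implicit Arguments. Unset Strict Implicit. Unset Printing Implicit Defensive.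

Section Attractors.
Variables (S : Type) (dom : S -> Prop) (step : S -> S -> Prop).
Local Notation reach := (clos_refl_trans S step).

Lemma reach_stuck (z y : S) : (forall u, ~ step z u) -> reach z y -> y = z.
Proof. by move=> stuck zy; case: {zy}(clos_rt_rt1n _ _ _ _ zy) => // u v /stuck. Qed.

Lemma attractor_stuck (A : S -> Prop) (z : S) :
  dom z -> (forall u, ~ step z u) -> (forall y, A y <-> y = z) ->
  attractor dom step A.
Proof.
move=> domz stuck Az; split; first by exists z; apply/Az.
split; first by move=> x /Az ->.
split; first by move=> x y /Az -> /Az ->; apply: rt_refl.
by move=> x y /Az -> /(reach_stuck stuck) ->; apply/Az.
Qed.

Lemma attractor_stuckE (A : S -> Prop) (z : S) :
  attractor dom step A -> A z -> (forall u, ~ step z u) ->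
  forall y, A y <-> y = z.
Proof.
move=> [_ [_ [connA _]]] Az stuck y; split=> [Ay|-> //].
exact: reach_stuck stuck (connA z y Az Ay).
Qed.

Lemma attractor_reach_terminal (y : S) :
  (forall z, reach y z -> reach z y) -> attractor (fun _ => True) step (reach y).
Proof.
move=> term; split; first by exists y; apply: rt_refl.
split=> //; split=> [x z /term xy yz | x z yx xz]; [exact: rt_trans yz | exact: rt_trans xz].
Qed.
End Attractors.

Section FiniteGraph.
Variables (S : finType) (step : S -> S -> Prop).
Local Notation reach := (clos_refl_trans S step).

Lemma reach_terminal (x : S) :
  exists2 y, reach x y & forall z, reach y z -> reach z y.
Proof.
pose reachable u := [set y | is_left (excluded_middle_informative (reach u y))].
have reachableP u y : reflect (reach u y) (y \in reachable u).
  by rewrite inE; case: excluded_middle_informative => ?; constructor.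
elim: {x}_.+1 {-2}x (ltnSn #|reachable x|) => // k IH x.
rewrite ltnS => card_x.
case: (classic (forall z, reach x z -> reach z x)) => [term | ].
  by exists x => //; apply: rt_refl.
move=> /not_all_ex_not [y not_xy_yx].
have [xy not_yx] := imply_to_and _ _ not_xy_yx.
have [z yz term] : exists2 z, reach y z & forall u, reach z u -> reach u z.
  apply: IH; apply: leq_trans card_x; apply: proper_card; apply/properP; split.
    by apply/subsetP => u /reachableP yu; apply/reachableP/(rt_trans _ _ _ _ _ xy).
  by exists x; [apply/reachableP/rt_refl | apply/reachableP].
by exists z => //; apply: rt_trans yz.
Qed.

Lemma reach_point_attractor (ws : seq S) :
  (forall A, attractor (fun _ => True) step A <->
     exists2 w, w \in ws & forall y, A y <-> y = w) ->
  forall x, exists2 w, w \in ws & reach x w.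
Proof.
move=> attractorsE x; have [y xy y_term] := reach_terminal x.
have [w ws_w yw] := (attractorsE _).1 (attractor_reach_terminal y_term).
by exists w; rewrite // -((yw y).1 (rt_refl _ _ y)).
Qed.
End FiniteGraph.

Definition set_coord (n : nat) (x : mstate n) (j : 'I_n) (v : nat) : mstate n :=
  [ffun k => if k == j then v else x k].

Lemma set_coordE (n : nat) (x : mstate n) j v k :
  set_coord x j v k = if k == j then v else x k.
Proof. by rewrite ffunE. Qed.

Lemma set_coord_off (n : nat) (x : mstate n) j v k :
  k != j -> set_coord x j v k = x k.
Proof. by rewrite set_coordE => /negbTE ->. Qed.

Lemma set_coord_id (n : nat) (x : mstate n) j : set_coord x j (x j) = x.
Proof. by apply/ffunP => k; rewrite set_coordE; case: eqP => [->|]. Qed.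

Lemma set_coordK (n : nat) (x : mstate n) j a b :
  set_coord (set_coord x j a) j b = set_coord x j b.
Proof. by apply/ffunP => k; rewrite !set_coordE; case: eqP. Qed.

Lemma set_coord_inX (n : nat) (m : 'I_n -> nat) (x : mstate n) j v :
  inX m x -> v <= m j -> inX m (set_coord x j v).
Proof. by move=> xX vm k; rewrite set_coordE; case: eqP => [->|]. Qed.

Lemma lift_state_inX (n : nat) (m : 'I_n -> nat) (w : bstate n) :
  (forall j, 0 < m j) -> inX m (lift_state m w).
Proof. by move=> m_gt0 k; rewrite ffunE; case: (w k); case: ltnP => //= _; lia. Qed.

Lemma lift_state_extreme (n : nat) (m : 'I_n -> nat) (x : mstate n) :
  (forall j, 0 < m j) -> (forall k, (x k == 0) || (x k == m k)) ->
  x = lift_state m [ffun k => x k != 0].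
Proof.
move=> m_gt0 x_ext; apply/ffunP => k; rewrite !ffunE.
have := x_ext k; have := m_gt0 k.
by case: eqP => /= [->|_ mk /eqP ->]; rewrite ?andbF ?andbT //; case: ltnP; lia.
Qed.

Lemma tlit_eval_lift (n : nat) (m : 'I_n -> nat) (w : bstate n) (l : tlit n) :
  (if 1 < m l.1.1 then l.2 < m l.1.1 else l.2 == 0) ->
  tlit_eval (lift_state m w) l = lit_eval w l.1.
Proof.
case: l => [[k p] s]; rewrite /tlit_eval /lit_eval /= ffunE.
by case: ltnP => [_|_ /eqP ->]; case: p; case: (w k) => /=; lia.
Qed.

Section ThresholdModel.
Variables (n : nat) (f : bstate n -> bstate n) (m : 'I_n -> nat).
Variables (D : 'I_n -> dnf n) (T : 'I_n -> tdnf n).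
Hypothesis m_gt0 : forall j, 0 < m j.
Hypothesis D_dnf : forall j, is_dnf_of f j (D j).
Hypothesis T_forget : forall j, forget (T j) = D j.
Hypothesis T_ok : thresholds_ok m T.
Hypothesis not_self_inhibited : forall j, 1 < m j -> ~ self_inhibited D j.

Local Notation h := (hmap m T).
Local Notation reach := (clos_refl_trans _ (mstep h)).

Lemma tdnf_eval_lift w j : tdnf_eval (lift_state m w) (T j) = f w j.
Proof.
rewrite D_dnf -T_forget /dnf_eval /tdnf_eval has_map.
apply: eq_in_has => c cT /=; rewrite all_map; apply: eq_in_all => l lc /=.
exact: tlit_eval_lift (T_ok cT lc).
Qed.

Lemma tdnf_eval_mono j (x y : mstate n) :
  ~ self_inhibited D j -> (forall k, k != j -> x k = y k) -> x j <= y j ->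
  tdnf_eval x (T j) -> tdnf_eval y (T j).
Proof.
move=> not_si xy_off le_xy /hasP [c cT /allP c_x]; apply/hasP; exists c => //.
apply/allP => [[[k p] s]] lc; move: (c_x _ lc); rewrite /tlit_eval /=.
case: (eqVneq k j) lc => [->|k_j] lc; last by rewrite xy_off.
case: p lc => lc; first by move/leq_trans; apply.
case: not_si; rewrite /self_inhibited -T_forget /forget has_map.
by apply/hasP; exists c => //=; apply/mapP; exists (j, false, s).
Qed.

Lemma hmap_fixed_coord (x : mstate n) j :
  inX m x -> h x = x -> x j = if tdnf_eval x (T j) then m j else 0.
Proof.
move=> xX /(congr1 (fun y : mstate n => y j)); rewrite /= ffunE.
by have := xX j; case: tdnf_eval; lia.
Qed.

Lemma lift_state_fixed w : f w = w -> h (lift_state m w) = lift_state m w.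
Proof.
move=> fw; apply/ffunP => j; rewrite ffunE tdnf_eval_lift fw !ffunE.
by have := m_gt0 j; case: (w j); rewrite /= ?andbT ?andbF //; case: ifP; lia.
Qed.

Lemma hmap_fixed_lift (x : mstate n) :
  inX m x -> h x = x -> exists2 w, f w = w & x = lift_state m w.
Proof.
move=> xX hx; have x_coord j := hmap_fixed_coord j xX hx.
have x_lift : x = lift_state m [ffun k => x k != 0].
  apply: lift_state_extreme => // k; rewrite x_coord.
  by case: tdnf_eval; rewrite eqxx ?orbT.
exists [ffun k => x k != 0] => //; apply/ffunP => j.
rewrite -tdnf_eval_lift -x_lift ffunE x_coord.
by have := m_gt0 j; case: tdnf_eval; lia.
Qed.

Lemma mstep_set_coord (x : mstate n) j :
  inX m x -> (if tdnf_eval x (T j) then x j < m j else 0 < x j) ->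
  mstep h x (set_coord x j (if tdnf_eval x (T j) then (x j).+1 else (x j).-1)).
Proof.
move=> xX x_moves; exists j; rewrite !set_coordE eqxx ffunE.
split; last split; last by move=> k /negbTE k_j; rewrite set_coordE k_j.
  by move: x_moves; case: tdnf_eval; lia.
by move: x_moves; case: tdnf_eval => x_moves; [rewrite ifT | rewrite ifF]; lia.
Qed.

Lemma reach_set_coord_top (x : mstate n) j :
  inX m x -> tdnf_eval x (T j) -> reach x (set_coord x j (m j)).
Proof.
move Ed: (m j - x j) => d; elim: d x Ed => [|d IH] x Ed xX xT.
  have -> : m j = x j by have := xX j; lia.
  by rewrite set_coord_id; apply: rt_refl.
have x_lt : x j < m j by lia.
have := @mstep_set_coord x j xX; rewrite xT => /(_ x_lt) x_step.
apply: rt_trans (rt_step _ _ _ _ x_step) _; rewrite -(set_coordK x j (x j).+1 (m j)).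
have [<-|x1_neq] := eqVneq (x j).+1 (m j); first by rewrite set_coordK; apply: rt_refl.
apply: IH.
- by rewrite set_coordE eqxx; lia.
- by apply: set_coord_inX.
- apply: tdnf_eval_mono xT.
  + by apply: not_self_inhibited; lia.
  + by move=> k k_j; rewrite set_coord_off.
  + by rewrite set_coordE eqxx.
Qed.

Lemma reach_set_coord_bot (x : mstate n) j :
  inX m x -> ~~ tdnf_eval x (T j) -> reach x (set_coord x j 0).
Proof.
move Ed: (x j) => d; elim: d x Ed => [|d IH] x Ed xX xT.
  by rewrite -Ed set_coord_id; apply: rt_refl.
have x_gt0 : 0 < x j by lia.
have := @mstep_set_coord x j xX; rewrite (negbTE xT) => /(_ x_gt0) x_step.
apply: rt_trans (rt_step _ _ _ _ x_step) _; rewrite -(set_coordK x j (x j).-1 0).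
have [->|x1_neq] := eqVneq (x j).-1 0; first by rewrite set_coordK; apply: rt_refl.
apply: IH.
- by rewrite set_coordE eqxx; lia.
- exact: set_coord_inX (leq_trans (leq_pred _) (xX j)).
- apply: contra xT; apply: tdnf_eval_mono.
  + by apply: not_self_inhibited; have := xX j; lia.
  + exact: set_coord_off.
  + by rewrite set_coordE eqxx leq_pred.
Qed.

Lemma reach_lift_state (x : mstate n) :
  inX m x -> exists w, reach x (lift_state m w).
Proof.
have extreme_outside (s : seq 'I_n) y :
    inX m y -> (forall k, k \notin s -> (y k == 0) || (y k == m k)) ->
    exists w, reach y (lift_state m w).
  elim: s y => [|j s IH] y yX y_ext.
    exists [ffun k => y k != 0]; rewrite -lift_state_extreme //; first exact: rt_refl.
    by move=> k; apply: y_ext.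
  pose v := if tdnf_eval y (T j) then m j else 0.
  have [w yj_w] : exists w, reach (set_coord y j v) (lift_state m w).
    apply: IH; first by apply: set_coord_inX; rewrite // /v; case: ifP.
    move=> k k_s; have [->|k_j] := eqVneq k j.
      by rewrite set_coordE eqxx /v; case: ifP; rewrite eqxx ?orbT.
    by rewrite set_coord_off //; apply: y_ext; rewrite inE negb_or k_j.
  exists w; apply: rt_trans yj_w; rewrite /v; case: ifP => yT.
    exact: reach_set_coord_top.
  by apply: reach_set_coord_bot; rewrite ?yT.
move=> xX; apply: (extreme_outside (enum 'I_n)) => // k.
by rewrite mem_enum.
Qed.

Lemma lift_state_bstep (w w' : bstate n) :
  bstep f w w' -> reach (lift_state m w) (lift_state m w').
Proof.
case=> i [_ [w'_i w'_off]].
have lift_w' : lift_state m w' = set_coord (lift_state m w) i (if f w i then m i else 0).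
  apply/ffunP => k; rewrite set_coordE !ffunE.
  case: eqP => [->|/eqP k_i]; last by rewrite w'_off.
  by rewrite w'_i; case: (f w i); rewrite ?andbT ?andbF //; have := m_gt0 i; case: ifP; lia.
rewrite lift_w'; have := tdnf_eval_lift w i; case: (f w i) => wT.
  by apply: reach_set_coord_top; rewrite ?wT //; apply: lift_state_inX.
by apply: reach_set_coord_bot; rewrite ?wT //; apply: lift_state_inX.
Qed.

Lemma lift_state_breach (w w' : bstate n) :
  clos_refl_trans _ (bstep f) w w' -> reach (lift_state m w) (lift_state m w').
Proof.
elim=> [u v /lift_state_bstep //|u|u v z _ uv _ vz]; first exact: rt_refl.
exact: rt_trans vz.
Qed.
End ThresholdModel.

Theorem proposition2 (n : nat) (hn : 1 <= n)
  (f : bstate n -> bstate n) (m : 'I_n -> nat) (hm : forall j, 0 < m j)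
  (D : 'I_n -> dnf n) (hD : forall j, shortest_dnf_of f j (D j))
  (T : 'I_n -> tdnf n) (hTD : forall j, forget (T j) = D j)
  (hT : thresholds_ok m T)
  (hnsi : forall j, 1 < m j -> ~ self_inhibited D j) :
  let h := hmap m T in
  ((forall w : bstate n, f w = w -> inX m (lift_state m w) /\ h (lift_state m w) = lift_state m w)
   /\ (forall x : mstate n, inX m x -> h x = x ->
         exists w : bstate n, f w = w /\ x = lift_state m w))
  /\
  (forall ws : seq (bstate n),
     uniq ws -> (forall w, w \in ws -> f w = w) ->
     (forall A : bstate n -> Prop,
        attractor (fun _ => True) (bstep f) A <->
        exists2 w, w \in ws & forall y, A y <-> y = w) ->
     forall A : mstate n -> Prop,
       attractor (inX m) (mstep h) A <->
       exists2 w, w \in ws & forall y, A y <-> y = lift_state m w).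
Proof.
move=> h; rewrite {}/h; have D_dnf j : is_dnf_of f j (D j) := proj1 (hD j).
have lift_fixed w : f w = w -> hmap m T (lift_state m w) = lift_state m w.
  exact: (lift_state_fixed hm D_dnf hTD hT).
have lift_stuck w y : f w = w -> ~ mstep (hmap m T) (lift_state m w) y.
  by move=> /lift_fixed fixed [i []]; rewrite fixed eqxx.
split; first split.
- by move=> w fw; split; [apply: lift_state_inX | apply: lift_fixed].
- by move=> x xX /(hmap_fixed_lift hm D_dnf hTD hT xX) [w]; exists w.
move=> ws _ ws_fixed attractorsE A; split; last first.
  case=> w ws_w Aw; apply: (attractor_stuck (z := lift_state m w)) => //.
  - exact: lift_state_inX.
  - by move=> y; apply: lift_stuck; apply: ws_fixed.
move=> A_attr; have [[x Ax] [A_dom [_ A_closed]]] := A_attr.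
have [w x_w] := reach_lift_state hm hTD hnsi (A_dom x Ax).
have [w0 ws_w0 w_w0] := reach_point_attractor attractorsE w.
exists w0 => //; apply: (attractor_stuckE A_attr).
- apply: A_closed Ax _; apply: rt_trans x_w _.
  exact: (lift_state_breach hm D_dnf hTD hT hnsi w_w0).
- by move=> y; apply: lift_stuck; apply: ws_fixed.
Qed.
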